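(* Let $F$ be an order continuous Banach lattice, $E$ a Banach space and $T\in\mathcal{L}(F,E)$. The following are equivalent: (i) $T$ is DNS, i.e. there is no disjoint sequence $(f_n)\subset\mathrm{S}_F$ with $\|Tf_n\|\to0$; (ii) $T$ is strictly DNS, i.e. there is $\delta>0$ such that no disjoint sequence $(f_n)\subset\mathrm{S}_F$ satisfies $\|Tf_n\|\le\delta$ for all $n$; (iii) there is no sequence (equivalently, no net) in $\mathrm{S}_F$ which is un-null and satisfies $\|Tf_i\|\to0$; (iv) there are $\varepsilon,\delta>0$ and $h\in F_+$ such that $\|Tf\|\ge\delta$ whenever $f\in\mathrm{S}_F$ and $\||f|\wedge h\|<\varepsilon$. Consequently, the set of DNS operators is open in $\mathcal{L}(F,E)$.
   Context: $\mathrm{S}_F$ is the unit sphere of $F$; $x,y$ disjoint means $|x|\wedge|y|=0$. The un-topology on $F$ is the linear topology with zero neighborhood base $\{f\in F:\||f|\wedge h\|<\varepsilon\}$, $h\in F_+$, $\varepsilon>0$. *)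

From HB Require Import structures.
From mathcomp Require Import all_boot all_order all_algebra.
From mathcomp Require Import all_classical all_reals all_analysis.
Set Implicit Arguments. Unset Strict Implicit. Unset Printing Implicit Defensive.
Import Order.TTheory GRing.Theory Num.Theory.
Import numFieldNormedType.Exports.
Local Open Scope classical_set_scope.
Local Open Scope ring_scope.

Record BanachLattice (R : realType) (F : completeNormedModType R) := {
  ble : F -> F -> Prop;
  bjoin : F -> F -> F;
  bmeet : F -> F -> F;
  ble_refl : forall x, ble x x;
  ble_trans : forall x y z, ble x y -> ble y z -> ble x z;
  ble_anti : forall x y, ble x y -> ble y x -> x = y;
  ble_add : forall x y z, ble x y -> ble (x + z) (y + z);
  ble_scale : forall (a : R) x y, 0 <= a -> ble x y -> ble (a *: x) (a *: y);
  bjoin_ubl : forall x y, ble x (bjoin x y);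
  bjoin_ubr : forall x y, ble y (bjoin x y);
  bjoin_lub : forall x y z, ble x z -> ble y z -> ble (bjoin x y) z;
  bmeet_lbl : forall x y, ble (bmeet x y) x;
  bmeet_lbr : forall x y, ble (bmeet x y) y;
  bmeet_glb : forall x y z, ble z x -> ble z y -> ble z (bmeet x y);
  bnorm_lattice : forall x y,
    ble (bjoin x (- x)) (bjoin y (- y)) -> `|x| <= `|y|
}.

Section BLDefs.
Context {R : realType} {F : completeNormedModType R} (L : BanachLattice F).

Definition babs (x : F) : F := bjoin L x (- x).

Definition bdisjoint (x y : F) : Prop := bmeet L (babs x) (babs y) = 0.

(* order continuity: every downward directed set of positive elements with
   infimum 0 (i.e. a decreasing net x_a ↓ 0) has norms tending to 0. *)
Definition order_continuous : Prop :=
  forall A : set F, A !=set0 ->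
    (forall a, A a -> ble L 0 a) ->
    (forall a b, A a -> A b -> exists2 c, A c & ble L c a /\ ble L c b) ->
    (forall x, (forall a, A a -> ble L x a) -> ble L x 0) ->
    forall eps : R, 0 < eps -> exists2 a, A a & `|a| < eps.

Definition un_null {I : Type} (FI : set_system I) (f : I -> F) : Prop :=
  forall h : F, ble L 0 h -> (fun i => `|bmeet L (babs (f i)) h|) @ FI --> (0 : R).

Definition un_null_seq (f : nat -> F) : Prop := un_null \oo f.

Definition DNS {E : normedModType R} (T : F -> E) : Prop :=
  ~ exists f : nat -> F,
      [/\ forall n, `|f n| = 1,
          forall n m, n <> m -> bdisjoint (f n) (f m) &
          (fun n => `|T (f n)|) @ \oo --> (0 : R)].

Definition strictly_DNS {E : normedModType R} (T : F -> E) : Prop :=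
  exists2 delta : R, 0 < delta &
    ~ exists f : nat -> F,
        [/\ forall n, `|f n| = 1,
            forall n m, n <> m -> bdisjoint (f n) (f m) &
            forall n, `|T (f n)| <= delta].

End BLDefs.

From HB Require Import structures.
From mathcomp Require Import all_boot all_order all_algebra.
From mathcomp Require Import all_classical all_reals all_analysis.
From mathcomp Require Import ring lra.
Import Order.TTheory GRing.Theory Num.Theory.
Import numFieldNormedType.Exports.
Local Open Scope classical_set_scope.
Local Open Scope ring_scope.

(* Two analytic facts carry the theorem:
   - [disjoint_un_null]: in an order continuous lattice every disjoint
     sequence is un-null; the partial sums of the |f_n| /\ h increase below h,
     and order continuity makes their tails small;
   - [DNS_iv]: if condition (iv) fails, one recursively picks norm one
     f_n with |Tf_n| < 2^-n which are almost disjoint from the previous ones;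
     the disjointification of [disjointification_not_DNS] (cutting |f_n|
     against a weighted sum of the others) then produces a disjoint
     normalised sequence (v_n) with Tv_n -> 0.
   The remaining implications (iv) => net version => sequence version => DNS,
   (iv) => strictly DNS => DNS, and the openness of the DNS operators (a
   perturbation of norm below the strict DNS constant stays DNS) are short. *)

Section BanachLatticeTheory.
Context {R : realType} {F : completeNormedModType R} (L : BanachLattice F).
Local Notation "x <=: y" := (ble L x y) (at level 70).
Local Notation jn := (bjoin L).
Local Notation mt := (bmeet L).

Lemma lle_trans {y x z} : x <=: y -> y <=: z -> x <=: z.
Proof. exact: (@ble_trans _ _ L). Qed.
Lemma lrefl x : x <=: x. Proof. exact: (@ble_refl _ _ L). Qed.
Lemma lanti x y : x <=: y -> y <=: x -> x = y.
Proof. exact: (@ble_anti _ _ L). Qed.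
Lemma ubl x y : x <=: jn x y. Proof. exact: (@bjoin_ubl _ _ L). Qed.
Lemma ubr x y : y <=: jn x y. Proof. exact: (@bjoin_ubr _ _ L). Qed.
Lemma lub x y z : x <=: z -> y <=: z -> jn x y <=: z.
Proof. exact: (@bjoin_lub _ _ L). Qed.
Lemma lbl x y : mt x y <=: x. Proof. exact: (@bmeet_lbl _ _ L). Qed.
Lemma lbr x y : mt x y <=: y. Proof. exact: (@bmeet_lbr _ _ L). Qed.
Lemma glb x y z : z <=: x -> z <=: y -> z <=: mt x y.
Proof. exact: (@bmeet_glb _ _ L). Qed.
Lemma le_scale {a x y} : 0 <= a -> x <=: y -> a *: x <=: a *: y.
Proof. exact: (@ble_scale _ _ L). Qed.
Lemma le_addr {x y} z : x <=: y -> x + z <=: y + z.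
Proof. exact: (@ble_add _ _ L). Qed.

Lemma le_addl z {x y} : x <=: y -> z + x <=: z + y.
Proof. by rewrite ![z + _]addrC; apply: (@ble_add _ _ L). Qed.
Lemma le_add2 {a b c d} : a <=: b -> c <=: d -> a + c <=: b + d.
Proof. move=> h1 h2; exact: lle_trans (le_addr c h1) (le_addl b h2). Qed.
Lemma add_ge0 {a b} : 0 <=: a -> 0 <=: b -> 0 <=: a + b.
Proof. by move=> h1 h2; have := le_add2 h1 h2; rewrite addr0. Qed.
Lemma le_opp {x y} : x <=: y -> -y <=: -x.
Proof.
move=> h; have := @ble_add _ _ L _ _ (- x - y) h.
by rewrite addrA subrr add0r addrC -addrA addNr addr0.
Qed.
Lemma le_subP x y : x <=: y <-> 0 <=: y - x.
Proof.
split=> h; first by have := le_addr (- x) h; rewrite subrr.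
by have := le_addr x h; rewrite add0r subrK.
Qed.
Lemma le_subl w {m} : 0 <=: m -> w - m <=: w.
Proof. by move=> h; have := le_addl w (le_opp h); rewrite oppr0 addr0. Qed.
Lemma le_addp w {m} : 0 <=: m -> w <=: w + m.
Proof. by move=> h; have := le_addl w h; rewrite addr0. Qed.

Lemma scale_ge0 {c q} : 0 <= c -> 0 <=: q -> 0 <=: c *: q.
Proof. by move=> c0 q0; have := le_scale c0 q0; rewrite scaler0. Qed.
Lemma scale_mono {al be q} : 0 <=: q -> al <= be -> al *: q <=: be *: q.
Proof.
move=> q0 ab'; apply/le_subP; rewrite -scalerBl; apply: scale_ge0 => //.
by rewrite subr_ge0.
Qed.
Lemma scale_le1 {c q} : 0 <= c -> c <= 1 -> 0 <=: q -> c *: q <=: q.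
Proof. by move=> c0 c1 q0; rewrite -{2}[q]scale1r; exact: scale_mono q0 c1. Qed.
Lemma scale_ge1 {c q} : 1 <= c -> 0 <=: q -> q <=: c *: q.
Proof. by move=> c1 q0; rewrite -{1}[q]scale1r; exact: scale_mono q0 c1. Qed.

Lemma joinC x y : jn x y = jn y x.
Proof. by apply: lanti; apply: lub; rewrite ?ubl ?ubr //; apply: ubr || apply: ubl. Qed.
Lemma meetC x y : mt x y = mt y x.
Proof. by apply: lanti; apply: glb; apply: lbl || apply: lbr. Qed.
Lemma join_l x y : y <=: x -> jn x y = x.
Proof. move=> h; apply: lanti; [apply: lub => //; exact: lrefl|exact: ubl]. Qed.
Lemma meet_l x y : x <=: y -> mt x y = x.
Proof. move=> h; apply: lanti; [exact: lbl|apply: glb => //; exact: lrefl]. Qed.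
Lemma join_mono {x x' y y'} : x <=: x' -> y <=: y' -> jn x y <=: jn x' y'.
Proof.
move=> h1 h2; apply: lub; [exact: lle_trans h1 (ubl _ _)|exact: lle_trans h2 (ubr _ _)].
Qed.
Lemma meet_mono {x x' y y'} : x <=: x' -> y <=: y' -> mt x y <=: mt x' y'.
Proof.
move=> h1 h2; apply: glb; [exact: lle_trans (lbl _ _) h1|exact: lle_trans (lbr _ _) h2].
Qed.
Lemma meet_pos {a b} : 0 <=: a -> 0 <=: b -> 0 <=: mt a b.
Proof. exact: glb. Qed.

Lemma joinDr x y z : jn (x + z) (y + z) = jn x y + z.
Proof.
apply: lanti; first by apply: lub; apply: le_addr; [exact: ubl|exact: ubr].
set J := jn (x + z) (y + z).
have : jn x y <=: J - z.
  apply: lub.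
  - by have := le_addr (- z) (ubl (x + z) (y + z)); rewrite addrK.
  - by have := le_addr (- z) (ubr (x + z) (y + z)); rewrite addrK.
by move/(le_addr z); rewrite subrK.
Qed.
Lemma meetDr x y z : mt (x + z) (y + z) = mt x y + z.
Proof.
apply: lanti; last by apply: glb; apply: le_addr; [exact: lbl|exact: lbr].
set J := mt (x + z) (y + z).
have : J - z <=: mt x y.
  apply: glb.
  - by have := le_addr (- z) (lbl (x + z) (y + z)); rewrite addrK.
  - by have := le_addr (- z) (lbr (x + z) (y + z)); rewrite addrK.
by move/(le_addr z); rewrite subrK.
Qed.
Lemma oppJ x y : - jn x y = mt (- x) (- y).
Proof.
apply: lanti; first by apply: glb; apply: le_opp; [exact: ubl|exact: ubr].
have : jn x y <=: - mt (- x) (- y).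
  apply: lub.
  - by have := le_opp (lbl (- x) (- y)); rewrite opprK.
  - by have := le_opp (lbr (- x) (- y)); rewrite opprK.
by move/le_opp; rewrite opprK.
Qed.
Lemma oppM x y : - mt x y = jn (- x) (- y).
Proof. by rewrite -[x]opprK -[y]opprK -oppJ !opprK. Qed.

Lemma join_meet_add x y : jn x y + mt x y = x + y.
Proof.
have : mt x y = - jn x y + (x + y).
  rewrite oppJ meetC -meetDr; congr mt.
  - by rewrite addKr.
  - by rewrite addrCA addNr addr0.
by move=> ->; rewrite addrA subrr add0r.
Qed.

Lemma scaleJ a x y : 0 <= a -> a *: jn x y = jn (a *: x) (a *: y).
Proof.
rewrite le_eqVlt => /orP[/eqP <-|a0].
  by rewrite !scale0r join_l //; exact: lrefl.
have ai : 0 <= a^-1 by rewrite invr_ge0 ltW.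
apply: lanti; last by apply: lub; apply: le_scale; rewrite ?ltW //; [exact: ubl|exact: ubr].
have : jn x y <=: a^-1 *: jn (a *: x) (a *: y).
  apply: lub.
  - have := le_scale ai (ubl (a *: x) (a *: y)).
    by rewrite scalerA mulVf ?gt_eqF // scale1r.
  - have := le_scale ai (ubr (a *: x) (a *: y)).
    by rewrite scalerA mulVf ?gt_eqF // scale1r.
by move/(le_scale (ltW a0)); rewrite scalerA mulfV ?gt_eqF // scale1r.
Qed.
Lemma scaleM a x y : 0 <= a -> a *: mt x y = mt (a *: x) (a *: y).
Proof.
move=> a0; rewrite -[mt x y]opprK oppM scalerN scaleJ // oppJ.
by rewrite !scalerN !opprK.
Qed.

Lemma meetDle {a b c} : 0 <=: a -> 0 <=: b -> 0 <=: c ->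
  mt (a + b) c <=: mt a c + mt b c.
Proof.
move=> a0 b0 c0; set w := mt (a + b) c.
have m0 : 0 <=: mt a c by apply: glb.
suff h : w - mt a c <=: mt b c by have := le_addr (mt a c) h; rewrite subrK addrC.
apply: glb; last exact: lle_trans (le_subl w m0) (lbr _ _).
rewrite oppM addrC -joinDr; apply: lub.
- by have := le_addl (- a) (lbl (a + b) c); rewrite addKr.
- have := le_addl (- c) (lbr (a + b) c); rewrite addNr => h.
  exact: lle_trans h b0.
Qed.
Lemma meetDle_r {c a b} : 0 <=: a -> 0 <=: b -> 0 <=: c ->
  mt c (a + b) <=: mt c a + mt c b.
Proof. by move=> a0 b0 c0; rewrite ![mt c _]meetC; exact: meetDle. Qed.

Lemma meet0Z {p q c} : 0 <=: p -> 0 <=: q -> mt p q = 0 -> 0 < c ->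
  mt p (c *: q) = 0.
Proof.
move=> p0 q0 e c0; apply: lanti; last first.
  by apply: glb => //; apply: scale_ge0 => //; exact: ltW.
case: (lerP c 1) => c1.
- rewrite -e; apply: meet_mono; [exact: lrefl|exact: scale_le1 (ltW c0) c1 q0].
- rewrite -(scaler0 _ c) -e scaleM ?(ltW c0) //; apply: meet_mono; last exact: lrefl.
  exact: scale_ge1 (ltW c1) p0.
Qed.

Local Notation ab := (babs L).

Definition pos x := jn x 0.

Lemma absE x : ab x = jn x (- x). Proof. by []. Qed.
Lemma abs_ub x : x <=: ab x. Proof. exact: ubl. Qed.
Lemma abs_ubN x : - x <=: ab x. Proof. exact: ubr. Qed.
Lemma abs_lub {x y} : x <=: y -> - x <=: y -> ab x <=: y.
Proof. exact: lub. Qed.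

Lemma pos_double {a} : 0 <=: a + a -> 0 <=: a.
Proof.
move=> h; have h2 : 0 <= (2 : R)^-1 by rewrite invr_ge0.
have := le_scale h2 h; rewrite scaler0 scalerDr -scalerDl -mulr2n.
have -> : ((2:R)^-1 *+ 2) = 1 by rewrite mulr2n [in RHS](splitr 1) mul1r.
by rewrite scale1r.
Qed.
Lemma abs_ge0 x : 0 <=: ab x.
Proof. by apply: pos_double; have := le_add2 (abs_ub x) (abs_ubN x); rewrite subrr. Qed.
Lemma abs_pos {x} : 0 <=: x -> ab x = x.
Proof.
move=> h; rewrite absE join_l //.
by have := le_opp h; rewrite oppr0 => h'; exact: lle_trans h' h.
Qed.
Lemma absN x : ab (- x) = ab x.
Proof. by rewrite !absE opprK joinC. Qed.
Lemma absZ a x : 0 <= a -> ab (a *: x) = a *: ab x.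
Proof. by move=> a0; rewrite !absE scaleJ // scalerN. Qed.
Lemma abs_abs x : ab (ab x) = ab x.
Proof. by rewrite abs_pos //; exact: abs_ge0. Qed.
Lemma abs_add x y : ab (x + y) <=: ab x + ab y.
Proof.
apply: abs_lub; first exact: le_add2 (abs_ub _) (abs_ub _).
by rewrite opprD; exact: le_add2 (abs_ubN _) (abs_ubN _).
Qed.
Lemma abs_sub x y : ab (x - y) = ab (y - x).
Proof. by rewrite -absN opprB. Qed.

Lemma norm_abs x : `|ab x| = `|x|.
Proof.
apply/eqP; rewrite eq_le; apply/andP; split; apply: (@bnorm_lattice _ _ L);
  rewrite -!absE abs_abs; exact: lrefl.
Qed.
Lemma norm_le_pos {x y} : 0 <=: x -> x <=: y -> `|x| <= `|y|.
Proof.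
move=> h0 h; apply: (@bnorm_lattice _ _ L).
rewrite -!absE !abs_pos //; exact: lle_trans h.
Qed.
Lemma norm_abs_le {x y} : ab x <=: y -> `|x| <= `|y|.
Proof. by move=> h; rewrite -norm_abs; apply: norm_le_pos h; exact: abs_ge0. Qed.

Lemma pos_ge0 x : 0 <=: pos x. Proof. exact: ubr. Qed.
Lemma pos_ub x : x <=: pos x. Proof. exact: ubl. Qed.
Lemma pos_id {x} : 0 <=: x -> pos x = x.
Proof. by move=> h; rewrite /pos join_l. Qed.
Lemma pos_eq0 {x} : x <=: 0 -> pos x = 0.
Proof. by move=> h; rewrite /pos joinC join_l. Qed.
Lemma pos_mono {x y} : x <=: y -> pos x <=: pos y.
Proof. by move=> h; apply: join_mono => //; exact: lrefl. Qed.
Lemma posZ a x : 0 <= a -> pos (a *: x) = a *: pos x.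
Proof. by move=> a0; rewrite /pos scaleJ // scaler0. Qed.
Lemma pos_subN x : pos x - pos (- x) = x.
Proof. by rewrite /pos -[in jn (- x) 0]oppr0 -oppM opprK join_meet_add addr0. Qed.
Lemma pos_addN x : pos x + pos (- x) = ab x.
Proof.
rewrite addrC /pos -joinDr add0r.
have e : - x + jn x 0 = jn 0 (- x) by rewrite addrC -joinDr subrr add0r.
rewrite e; apply: lanti.
- apply: lub; apply: lub; (try exact: abs_ge0); [exact: abs_ubN|exact: abs_ub].
- apply: abs_lub.
  + exact: lle_trans (ubl x 0) (ubr _ _).
  + exact: lle_trans (ubr 0 (-x)) (ubl _ _).
Qed.
Lemma pos_meetN x : mt (pos x) (pos (- x)) = 0.
Proof.
have e : pos (- x) = pos x - x by rewrite -[X in _ = _ - X](pos_subN x) opprB addrC subrK.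
rewrite e -{1}[pos x]add0r [pos x - x]addrC meetDr /pos.
have -> : mt 0 (- x) = - jn 0 x by rewrite oppJ oppr0.
by rewrite joinC addNr.
Qed.
Lemma sub_pos u v : u - pos (u - v) = mt u v.
Proof. by rewrite /pos oppJ oppr0 opprB addrC -meetDr subrK add0r meetC. Qed.

Lemma pos_cut_disjoint {a b s t} : 0 <=: a -> 0 <=: b -> 0 < s -> 0 < t ->
  1 <= s * t -> mt (pos (a - s *: b)) (pos (b - t *: a)) = 0.
Proof.
move=> a0 b0 s0 t0 st; set x := a - s *: b.
have si : 0 < s^-1 by rewrite invr_gt0.
have h1 : pos (b - t *: a) <=: s^-1 *: pos (- x).
  rewrite -posZ ?(ltW si) //; apply: pos_mono.
  have -> : s^-1 *: - x = b - s^-1 *: a.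
    by rewrite /x opprB scalerBr scalerA mulVf ?gt_eqF // scale1r.
  apply: le_addl; apply: le_opp; apply: scale_mono => //.
  by rewrite -(ler_pM2l s0) mulfV ?gt_eqF.
apply: lanti; last by apply: glb; exact: pos_ge0.
apply: lle_trans (meet_mono (lrefl _) h1) _.
rewrite meet0Z //; [exact: lrefl|exact: pos_ge0|exact: pos_ge0|exact: pos_meetN].
Qed.

Lemma pos_lip x y : ab (pos x - pos y) <=: ab (x - y).
Proof.
have H : forall x y, pos x - pos y <=: ab (x - y).
  move=> x' y'.
  have : pos x' <=: pos y' + ab (x' - y').
    apply: lub.
    - by have := le_add2 (pos_ub y') (abs_ub (x' - y')); rewrite addrCA subrr addr0.
    - by have := le_add2 (pos_ge0 y') (abs_ge0 (x' - y')); rewrite addr0.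
  by move/(le_addr (- pos y')); rewrite addrAC subrr add0r.
apply: abs_lub; first exact: H.
by rewrite opprB abs_sub; exact: H.
Qed.
Lemma norm_pos_lip x y : `|pos x - pos y| <= `|x - y|.
Proof. by rewrite -(norm_abs (x - y)); apply: norm_abs_le; exact: pos_lip. Qed.

(* The positive cone is closed: a limit of eventually positive elements is
   positive (its negative part is arbitrarily small). *)
Lemma closed_pos (u : nat -> F) x : (exists N, forall n, (N <= n)%N -> 0 <=: u n) ->
  u n @[n --> \oo] --> x -> 0 <=: x.
Proof.
move=> [N0 u0] ux.
have p0 : pos (- x) = 0.
  apply/eqP; rewrite -normr_eq0 eq_le normr_ge0 andbT.
  apply/ler_addgt0Pr => e e0; rewrite add0r.
  have := (cvgrPdist_lt _ _).1 ux e e0; case=> N _ HN.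
  have := HN (maxn N N0) (leq_maxl _ _) => /= hN.
  have -> : pos (- x) = pos (- x) - pos (- u (maxn N N0)).
    rewrite (@pos_eq0 (- u (maxn N N0))) ?subr0 // -oppr0; apply: le_opp.
    by apply: u0; rewrite leq_maxr.
  apply: le_trans (norm_pos_lip _ _) _.
  by rewrite opprK addrC -normrN opprB; exact: ltW.
by rewrite -(pos_subN x) p0 subr0; exact: pos_ge0.
Qed.

(* Archimedean property: a positive w whose multiples w *+ k all stay below
   one element h vanishes, since k |w| <= |h| for every k. *)
Lemma multiples_bounded_eq0 (w h : F) :
  0 <=: w -> (forall k, w *+ k <=: h) -> w = 0.
Proof.
move=> w0 wh; apply/eqP; rewrite -normr_eq0; apply/negPn/negP => wn0.
have wp : 0 < `|w| by rewrite lt_neqAle eq_sym wn0 normr_ge0.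
set k := Num.bound (`|h| / `|w|).
have hk : `|h| / `|w| < k%:R by apply: archi_boundP; rewrite divr_ge0.
have wk0 : 0 <=: w *+ k by rewrite -scaler_nat; exact: scale_ge0.
have := norm_le_pos wk0 (wh k); rewrite normrMn -mulr_natr mulrC => hk'.
move: hk; rewrite ltr_pdivrMr // => hk.
by move: (lt_le_trans hk hk'); rewrite ltxx.
Qed.

Lemma sum_ge0 (u : nat -> F) n : (forall k, 0 <=: u k) -> 0 <=: \sum_(k < n) u k.
Proof.
move=> u0; elim: n => [|n IH]; first by rewrite big_ord0; exact: lrefl.
by rewrite big_ord_recr /=; exact: add_ge0.
Qed.
Lemma sum_mono (u : nat -> F) m n : (forall k, 0 <=: u k) -> (m <= n)%N ->
  \sum_(k < m) u k <=: \sum_(k < n) u k.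
Proof.
move=> u0 /subnKC <-; elim: (n - m)%N => [|d IH]; first by rewrite addn0; exact: lrefl.
rewrite addnS big_ord_recr /=; apply: lle_trans IH _; exact: le_addp.
Qed.
Lemma sum_le (u v : nat -> F) n : (forall k, u k <=: v k) ->
  \sum_(k < n) u k <=: \sum_(k < n) v k.
Proof.
move=> uv; elim: n => [|n IH]; first by rewrite !big_ord0; exact: lrefl.
by rewrite !big_ord_recr /=; apply: le_add2.
Qed.
Lemma sum_term {u : nat -> F} {n k} : (forall i, 0 <=: u i) -> (n < k)%N ->
  u n <=: \sum_(i < k) u i.
Proof.
move=> u0 nk; apply: lle_trans (sum_mono u n.+1 k u0 nk).
rewrite big_ord_recr /= addrC; apply: le_addp; exact: sum_ge0.
Qed.
Lemma meet_sum (u : nat -> F) c n : (forall k, 0 <=: u k) -> 0 <=: c ->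
  mt (\sum_(k < n) u k) c <=: \sum_(k < n) mt (u k) c.
Proof.
move=> u0 c0; elim: n => [|n IH].
  by rewrite !big_ord0 meet_l //; exact: lrefl.
rewrite !big_ord_recr /=; apply: lle_trans (meetDle (sum_ge0 u n u0) (u0 n) c0) _.
exact: le_addr.
Qed.

Lemma trunc x d : 0 <=: d -> d <=: ab x ->
  ab (mt (pos x) d - mt (pos (- x)) d) <=: d /\
  ab (x - (mt (pos x) d - mt (pos (- x)) d)) <=: ab x - d.
Proof.
move=> d0 dx.
set a := mt (pos x) d; set b := mt (pos (- x)) d.
have a0 : 0 <=: a := meet_pos (pos_ge0 x) d0.
have b0 : 0 <=: b := meet_pos (pos_ge0 (- x)) d0.
have ab0 : mt a b = 0.
  apply: lanti; last exact: meet_pos.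
  by rewrite -(pos_meetN x); apply: meet_mono; exact: lbl.
have sab : a + b <=: d.
  by rewrite -join_meet_add ab0 addr0; apply: lub; exact: lbr.
split.
  apply: lle_trans (abs_add a (- b)) _; rewrite absN !abs_pos //.
have e : x - (a - b) = (pos x - a) - (pos (- x) - b).
  rewrite -{1}(pos_subN x) !opprB addrACA [RHS]addrACA.
  by rewrite [- pos (- x) - a]addrC.
have pa : 0 <=: pos x - a := (le_subP _ _).1 (lbl _ _).
have pb : 0 <=: pos (- x) - b := (le_subP _ _).1 (lbl _ _).
rewrite e; apply: lle_trans (abs_add _ _) _; rewrite absN (abs_pos pa) (abs_pos pb).
have -> : pos x - a + (pos (- x) - b) = ab x - (a + b).
  by rewrite -pos_addN opprD addrACA.
apply: le_addl; apply: le_opp.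
have <- : mt (ab x) d = d by rewrite meetC meet_l.
rewrite -pos_addN; exact: meetDle (pos_ge0 _) (pos_ge0 _) d0.
Qed.


Section DisjointSequences.
Hypothesis Hoc : order_continuous L.

(* In an order continuous lattice, an increasing order-bounded sequence x has
   small tails: the elements y - x n, with y an upper bound of x, form a
   downward directed set of positive elements whose infimum is 0 (by the
   Archimedean property), so one of them is small in norm. *)
Lemma increasing_bounded_gap {x : nat -> F} {h : F} :
  (forall n m, (n <= m)%N -> x n <=: x m) -> (forall n, x n <=: h) ->
  forall e : R, 0 < e ->
  exists y, exists N, (forall n, x n <=: y) /\ `|y - x N| < e.
Proof.
move=> xmono xh e e0.
set D := [set y | forall n, x n <=: y].
set A := [set z | exists y, exists n, D y /\ z = y - x n].
have [a [y [N [Dy ->]]] ae] : exists2 a, A a & `|a| < e; last by exists y, N.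
apply: Hoc => //.
- by exists (h - x 0%N); exists h, 0%N.
- by move=> a [y [n [Dy ->]]]; exact: (le_subP (x n) y).1 (Dy n).
- move=> a b [y1 [n1 [D1 ->]]] [y2 [n2 [D2 ->]]].
  exists (mt y1 y2 - x (maxn n1 n2)).
    by exists (mt y1 y2), (maxn n1 n2); split => // n; apply: glb.
  split; (apply: le_add2; [exact: lbl || exact: lbr|apply: le_opp; apply: xmono]).
  + by rewrite leq_maxl.
  + by rewrite leq_maxr.
- move=> z zA; set w := pos z.
  have DS : forall y, D y -> D (y - w).
    move=> y Dy n.
    have : x n + w <=: y.
      rewrite addrC /w /pos -joinDr add0r; apply: lub; last exact: Dy.
      have := le_addr (x n) (zA (y - x n) _); rewrite subrK; apply.
      by exists y, n.
    by move/(le_addr (- w)); rewrite addrK.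
  have Dk : forall k n, x n <=: h - w *+ k.
    elim=> [|k IH] n; first by rewrite subr0.
    by rewrite mulrSr opprD addrA; exact: (DS _ IH n).
  have w0 : w = 0.
    apply: (@multiples_bounded_eq0 w (h - x 0%N) (pos_ge0 z)) => k.
    have := le_addr (w *+ k - x 0%N) (Dk k 0%N).
    by rewrite [X in X <=: _]addrC subrK addrA subrK.
  by apply: lle_trans (pos_ub z) _; rewrite -/w w0; exact: lrefl.
Qed.

(* Every disjoint sequence is un-null: for h >= 0 the elements
   g n = |f n| /\ h are disjoint, so their partial sums increase below h, and
   g n is dominated by any tail gap y - x N of these sums once n >= N. *)
Lemma disjoint_un_null (f : nat -> F) :
  (forall n m, n <> m -> bdisjoint L (f n) (f m)) -> un_null_seq L f.
Proof.
move=> fd h h0.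
set g := fun n => mt (ab (f n)) h.
have g0 : forall n, 0 <=: g n by move=> n; apply: glb => //; exact: abs_ge0.
have gd : forall n m, n <> m -> mt (g n) (g m) = 0.
  move=> n m nm; apply: lanti; last exact: meet_pos.
  by rewrite -(fd n m nm); apply: meet_mono; exact: lbl.
set x := fun n => \sum_(k < n) g k.
have xS : forall n, x n.+1 = x n + g n by move=> n; rewrite /x big_ord_recr.
have xmono : forall n m, (n <= m)%N -> x n <=: x m by move=> n m; exact: sum_mono.
have x_disj : forall n m, (n <= m)%N -> mt (x n) (g m) = 0.
  move=> n m nm; apply: lanti; last exact: meet_pos (sum_ge0 _ _ g0) (g0 m).
  apply: lle_trans (meet_sum g (g m) n g0 (g0 m)) _.
  rewrite big1; first exact: lrefl.
  by move=> [k kn] _ /=; apply: gd => km; move: kn; rewrite km ltnNge nm.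
have xh : forall n, x n <=: h.
  elim=> [|n IH]; first by rewrite /x big_ord0.
  rewrite xS -join_meet_add x_disj // addr0; apply: lub => //; exact: lbr.
apply/(cvgrPdist_lt _ _).2 => e e0.
have [y [N [Dy ye]]] := increasing_bounded_gap xmono xh e e0.
exists N => // n /= Nn.
rewrite sub0r normrN normr_id; apply: le_lt_trans ye.
apply: norm_le_pos (g0 n) _.
have gx : g n <=: x n.+1 - x N.
  rewrite xS addrAC; apply: (le_subP _ _).2; rewrite addrK.
  exact: (le_subP _ _).1 (xmono _ _ Nn).
by apply: lle_trans gx _; apply: le_addr.
Qed.

End DisjointSequences.

Definition pow2 (k : nat) : R := 2 ^+ k.
Lemma pow2_gt0 k : 0 < pow2 k. Proof. by rewrite /pow2 exprn_gt0. Qed.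
Lemma pow2_ge1 k : 1 <= pow2 k. Proof. by rewrite /pow2 exprn_ege1 // ler1n. Qed.
Lemma pow2_neq0 k : pow2 k != 0. Proof. by rewrite gt_eqF // pow2_gt0. Qed.
Lemma pow2_mono m n : (m <= n)%N -> pow2 m <= pow2 n.
Proof. by move=> mn; rewrite /pow2 ler_eXn2l // ltr1n. Qed.
Lemma pow2S k : pow2 k.+1 = 2 * pow2 k. Proof. by rewrite /pow2 exprS. Qed.
Lemma pow2D m n : pow2 (m + n) = pow2 m * pow2 n. Proof. by rewrite /pow2 exprD. Qed.

Lemma lef_inv (x y : R) : 0 < y -> y <= x -> x^-1 <= y^-1.
Proof. by move=> y0 yx; rewrite lef_pV2 ?posrE // (lt_le_trans y0 yx). Qed.

Lemma telescope3 (x y z w : F) : w - y = x + (z - (x + y)) + (w - z).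
Proof.
have -> : x + (z - (x + y)) = z - y by rewrite opprD addrCA addNKr.
by rewrite [RHS]addrC addrA subrK.
Qed.

Section Disjointification.
Variables (E : normedModType R) (T : {linear F -> E}) (M : R).
Hypothesis M_ge0 : 0 <= M.
Hypothesis TM : forall x, `|T x| <= M * `|x|.
Variable f : nat -> F.
Hypothesis f_norm1 : forall n, `|f n| = 1.
Hypothesis f_almost_disjoint : forall n,
  `|mt (ab (f n)) ((pow2 n * pow2 n) *: \sum_(k < n) ab (f k))| < (8 * pow2 n ^+ 3)^-1.
Hypothesis Tf_small : forall n, `|T (f n)| < (pow2 n)^-1.

Let u k := ab (f k).
Let H n := \sum_(k < n) u k.
Let u_ge0 k : 0 <=: u k. Proof. exact: abs_ge0. Qed.
Let a k := (pow2 k)^-1 *: u k.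
Let a_ge0 k : 0 <=: a k.
Proof. by apply: scale_ge0 => //; rewrite invr_ge0 ltW // pow2_gt0. Qed.
Let a_le_u k : a k <=: u k.
Proof.
apply: scale_le1; [by rewrite invr_ge0 ltW // pow2_gt0| |exact: u_ge0].
by rewrite invf_le1 ?pow2_gt0 ?pow2_ge1.
Qed.
Let P n := \sum_(k < n) a k.
Let P_ge0 n : 0 <=: P n. Proof. exact: sum_ge0. Qed.
Let PS n : P n.+1 = P n + a n. Proof. by rewrite /P big_ord_recr. Qed.
Let Pmono m n : (m <= n)%N -> P m <=: P n. Proof. exact: sum_mono. Qed.
Let P_le_H n : P n <=: H n. Proof. exact: sum_le. Qed.
Let c n := pow2 n * pow2 n.
Let c_gt0 n : 0 < c n. Proof. by rewrite mulr_gt0 ?pow2_gt0. Qed.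

(* The series of the a k converges absolutely, since |a k| = 2^-k. *)
Let P_cvg_ex : exists w : F, P n @[n --> \oo] --> w.
Proof.
have : cvgn (series a).
  apply: normed_cvg.
  have -> : [normed series a] = series (geometric 1 (2^-1 : R)).
    rewrite funeqE => n /=; apply: eq_bigr => k _.
    rewrite /a normrZ norm_abs f_norm1 mulr1 ger0_norm ?invr_ge0 ?ltW ?pow2_gt0 //.
    by rewrite /= mul1r /pow2 exprVn.
  apply: is_cvg_geometric_series; rewrite ger0_norm ?invr_ge0 //.
  by rewrite invf_lt1 // ltr1n.
move/cvg_ex => [w hw]; exists w.
have -> : P = series a by rewrite funeqE => n; rewrite /P /series /= big_mkord.
exact: hw.
Qed.

Let w := limn P.
Let P_cvg : P n @[n --> \oo] --> w.
Proof. by have := (cvg_ex _).2 P_cvg_ex. Qed.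

(* The partial sums increase to w, so w - P K is positive (closed cone). *)
Let w_sub_P_ge0 K : 0 <=: w - P K.
Proof.
apply: (closed_pos (fun n => P n - P K)); last exact: cvgB P_cvg (cvg_cst _).
by exists K => n Kn /=; apply: (le_subP _ _).1; exact: Pmono.
Qed.
Let P_le_w K : P K <=: w. Proof. exact: (le_subP _ _).2 (w_sub_P_ge0 K). Qed.

Let W n := w - a n.
Let WE n : W n = (w - P n.+1) + P n.
Proof. by rewrite /W PS opprD addrA addrAC subrK. Qed.
Let W_ge0 n : 0 <=: W n.
Proof. by rewrite WE; have := le_add2 (w_sub_P_ge0 n.+1) (P_ge0 n); rewrite addr0. Qed.

(* d n = (|f n| - c n W n)^+: the part of |f n| not dominated by the others.
   These elements are pairwise disjoint and close to |f n|. *)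
Let d n := pos (u n - c n *: W n).
Let d_ge0 n : 0 <=: d n. Proof. exact: pos_ge0. Qed.
Let d_le_u n : d n <=: u n.
Proof.
rewrite /d -{2}(pos_id (u_ge0 n)); apply: pos_mono; apply: le_subl.
by apply: scale_ge0; [exact: ltW|exact: W_ge0].
Qed.

Let u_le_H n k : (n < k)%N -> u n <=: H k.
Proof. by move=> nk; exact: sum_term. Qed.

(* |f n| meets a later term c n a k only a little, because f k is almost
   disjoint from H k >= |f n|. *)
Let meet_u_later n k : (n < k)%N -> `|mt (u n) (c n *: a k)| <= (8 * pow2 k)^-1.
Proof.
move=> nk; set C := pow2 k * pow2 k.
have C1 : 1 <= C by rewrite mulr_ege1 ?pow2_ge1.
have C0 : 0 <= C by apply: le_trans C1; rewrite ler01.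
have ck : c n / pow2 k <= C.
  apply: le_trans (_ : c n <= C).
    by rewrite ler_pdivrMr ?pow2_gt0 // ler_peMr ?pow2_ge1 // ltW.
  rewrite /c /C; apply: ler_pM; [exact: ltW (pow2_gt0 n)|exact: ltW (pow2_gt0 n)| |];
    by apply: pow2_mono; exact: ltnW.
have e1 : c n *: a k = (c n / pow2 k) *: u k by rewrite /a scalerA.
have h1 : mt (u n) (c n *: a k) <=: C *: mt (u k) (C *: H k).
  rewrite e1; apply: (@lle_trans (mt (C *: u n) (C *: u k))).
    apply: meet_mono; first exact: scale_ge1.
    exact: scale_mono.
  rewrite -scaleM //; apply: le_scale => //; rewrite meetC; apply: meet_mono.
    exact: lrefl.
  by apply: lle_trans (u_le_H n k nk) _; apply: scale_ge1 => //; exact: sum_ge0.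
have := norm_le_pos (meet_pos (u_ge0 n) (scale_ge0 (ltW (c_gt0 n)) (a_ge0 k))) h1.
move/le_trans; apply; rewrite normrZ ger0_norm //.
have -> : (8 * pow2 k)^-1 = C * (8 * pow2 k ^+ 3)^-1.
  by rewrite /C !exprS expr0 mulr1; field; rewrite pow2_neq0.
by rewrite ler_pM2l ?(lt_le_trans ltr01 C1) // ltW // f_almost_disjoint.
Qed.

Let meet_u_block n j : `|mt (u n) (c n *: (P (n.+1 + j) - P n.+1))|
    <= (8 * pow2 n)^-1 * (1 - (pow2 j)^-1).
Proof.
elim: j => [|j IH].
  rewrite addn0 subrr scaler0 meetC meet_l ?u_ge0 // normr0 /pow2 expr0 invr1 subrr mulr0.
  exact: lexx.
set K := (n.+1 + j)%N.
have X0 : 0 <=: P K - P n.+1 by apply: (le_subP _ _).1; apply: Pmono; rewrite leq_addr.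
rewrite addnS -/K PS addrAC scalerDr.
have := meetDle_r (scale_ge0 (ltW (c_gt0 n)) X0) (scale_ge0 (ltW (c_gt0 n)) (a_ge0 K)) (u_ge0 n).
move/(norm_le_pos (meet_pos (u_ge0 n) _)) => h.
have := h (add_ge0 (scale_ge0 (ltW (c_gt0 n)) X0) (scale_ge0 (ltW (c_gt0 n)) (a_ge0 K))).
move=> {}h; apply: le_trans h _; apply: le_trans (ler_normD _ _) _.
have nK : (n < K)%N by rewrite /K ltnS leq_addr.
apply: le_trans (lerD IH (meet_u_later n K nK)) _.
have -> : pow2 K = 2 * pow2 n * pow2 j by rewrite /K addSn pow2S pow2D mulrA.
rewrite pow2S le_eqVlt; apply/orP; left; apply/eqP; field.
by rewrite !pow2_neq0.
Qed.

(* |f n| - d n = |f n| /\ c n W n is small: W n splits into earlier terms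
   (controlled by the hypothesis on f n), a block of later terms, and a
   small tail of the series. *)
Let u_sub_d_small n : `|u n - d n| <= (4 * pow2 n)^-1.
Proof.
rewrite /d sub_pos.
apply/ler_addgt0Pr => e e0.
have cn0 := c_gt0 n.
have ce : 0 < e / c n by rewrite divr_gt0.
have [N _ HN] := (cvgrPdist_lt _ _).1 P_cvg _ ce.
set K := (n.+1 + N)%N.
have hK : `|w - P K| < e / c n.
  by apply: HN; rewrite /= /K leq_addl.
have X0 : 0 <=: P K - P n.+1 by apply: (le_subP _ _).1; apply: Pmono; rewrite leq_addr.
have eW : W n = P n + (P K - P n.+1) + (w - P K) by rewrite /W PS -telescope3.
rewrite eW scalerDr scalerDr.
have A1 := scale_ge0 (ltW cn0) (P_ge0 n).
have A2 := scale_ge0 (ltW cn0) X0.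
have A3 := scale_ge0 (ltW cn0) (w_sub_P_ge0 K).
have h := lle_trans (meetDle_r (add_ge0 A1 A2) A3 (u_ge0 n)) (le_addr _ (meetDle_r A1 A2 (u_ge0 n))).
apply: le_trans (norm_le_pos (meet_pos (u_ge0 n) (add_ge0 (add_ge0 A1 A2) A3)) h) _.
apply: le_trans (ler_normD _ _) _; apply: le_trans (lerD (ler_normD _ _) (lexx _)) _.
have b1 : `|mt (u n) (c n *: P n)| <= (8 * pow2 n ^+ 3)^-1.
  apply: le_trans (norm_le_pos (meet_pos (u_ge0 n) A1) (meet_mono (lrefl (u n)) (le_scale (ltW cn0) (P_le_H n)))) _.
  apply: ltW; exact: f_almost_disjoint.
have b2 := meet_u_block n N.
have b3 : `|mt (u n) (c n *: (w - P K))| <= e.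
  apply: le_trans (norm_le_pos (meet_pos (u_ge0 n) A3) (lbr _ _)) _.
  rewrite normrZ ger0_norm ?(ltW cn0) //.
  by rewrite -ler_pdivlMl // mulrC; exact: ltW.
have h1 : (8 * pow2 n ^+ 3)^-1 <= (8 * pow2 n)^-1.
  apply: lef_inv; first by rewrite mulr_gt0 ?pow2_gt0.
  have := pow2_ge1 n; rewrite !exprS expr0 mulr1 => p1; nra.
have q0 : 0 <= (pow2 N)^-1 by rewrite invr_ge0 ltW ?pow2_gt0.
have t0 : 0 <= (8 * pow2 n)^-1 by rewrite invr_ge0 mulr_ge0 ?ltW ?pow2_gt0.
have h2 : (8 * pow2 n)^-1 * (1 - (pow2 N)^-1) <= (8 * pow2 n)^-1.
  by apply: ler_piMr => //; lra.
have -> : (4 * pow2 n)^-1 = 2 * (8 * pow2 n)^-1 by field; rewrite pow2_neq0.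
lra.
Qed.

(* Disjointness of the d n: cut |f n| against (c n / 2^m) |f m| <= c n W n,
   and the cutting factors of n and m multiply to at least 1. *)
Let a_pair_le_w n m : (n < m)%N -> a n + a m <=: w.
Proof.
move=> nm; apply: (lle_trans _ (P_le_w m.+1)); rewrite PS; apply: le_add2; last exact: lrefl.
apply: (lle_trans _ (Pmono _ _ nm)); rewrite PS addrC; exact: le_addp.
Qed.

Let a_le_W n m : n <> m -> a m <=: W n.
Proof.
move=> nm; case: (ltngtP n m) => [lt|gt|eq]; last by [].
- by have := le_addr (- a n) (a_pair_le_w _ _ lt); rewrite addrAC subrr add0r.
- by have := le_addr (- a n) (a_pair_le_w _ _ gt); rewrite addrK.
Qed.

Let d_le_cut n m : n <> m -> d n <=: pos (u n - (c n / pow2 m) *: u m).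
Proof.
move=> nm; apply: pos_mono; apply: le_addl; apply: le_opp.
rewrite -scalerA; apply: le_scale; [exact: ltW|exact: a_le_W].
Qed.

Let d_disjoint n m : n <> m -> mt (d n) (d m) = 0.
Proof.
move=> nm; apply: lanti; last exact: meet_pos.
have s0 : 0 < c n / pow2 m by rewrite divr_gt0 ?pow2_gt0.
have t0 : 0 < c m / pow2 n by rewrite divr_gt0 ?pow2_gt0.
have st : 1 <= (c n / pow2 m) * (c m / pow2 n).
  have -> : (c n / pow2 m) * (c m / pow2 n) = pow2 n * pow2 m.
    by rewrite /c; field; rewrite !pow2_neq0.
  by rewrite mulr_ege1 ?pow2_ge1.
rewrite -(pos_cut_disjoint (u_ge0 n) (u_ge0 m) s0 t0 st); apply: meet_mono; first exact: d_le_cut.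
by apply: d_le_cut => e; apply: nm.
Qed.

(* g n is f n truncated at d n; it inherits disjointness from the d n and
   stays within 1 / (4 2^n) of f n. *)
Let g n := mt (pos (f n)) (d n) - mt (pos (- f n)) (d n).
Let g_trunc n : ab (g n) <=: d n /\ ab (f n - g n) <=: ab (f n) - d n.
Proof. exact: trunc (d_ge0 n) (d_le_u n). Qed.
Let f_sub_g_small n : `|f n - g n| <= (4 * pow2 n)^-1.
Proof. exact: le_trans (norm_abs_le (g_trunc n).2) (u_sub_d_small n). Qed.
Let quarter_bound n : (4 * pow2 n)^-1 <= 4^-1.
Proof. by apply: lef_inv => //; rewrite ler_peMr ?pow2_ge1. Qed.
Let g_norm_ge n : 3 / 4 <= `|g n|.
Proof.
have h : `|f n| <= `|g n| + `|f n - g n|.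
  by rewrite -[X in `|X| <= _](subrK (g n) (f n)) addrC ler_normD.
have := f_sub_g_small n; have := quarter_bound n; rewrite f_norm1 in h; lra.
Qed.
Let g_norm_gt0 n : 0 < `|g n|. Proof. by apply: lt_le_trans (g_norm_ge n); lra. Qed.
Let v n := (`|g n|)^-1 *: g n.
Let v_norm1 n : `|v n| = 1.
Proof. by rewrite normrZ ger0_norm ?invr_ge0 ?ltW // mulVf // gt_eqF. Qed.
Let g_disjoint n m : n <> m -> mt (ab (g n)) (ab (g m)) = 0.
Proof.
move=> nm; apply: lanti; last exact: meet_pos (abs_ge0 _) (abs_ge0 _).
by rewrite -(d_disjoint _ _ nm); apply: meet_mono; exact: (g_trunc _).1.
Qed.
Let v_disjoint n m : n <> m -> bdisjoint L (v n) (v m).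
Proof.
move=> nm; rewrite /bdisjoint /v !absZ ?invr_ge0 ?ltW //.
have c0 k : 0 < (`|g k|)^-1 by rewrite invr_gt0.
have h1 : mt (ab (g m)) (ab (g n)) = 0 by rewrite meetC g_disjoint.
have h2 := meet0Z (abs_ge0 _) (abs_ge0 _) h1 (c0 n).
rewrite meetC in h2.
exact: meet0Z (scale_ge0 (ltW (c0 n)) (abs_ge0 _)) (abs_ge0 _) h2 (c0 m).
Qed.
Let Tv_small n : `|T (v n)| <= (4 / 3 * (1 + M / 4)) * (pow2 n)^-1.
Proof.
have hTg : `|T (g n)| <= (pow2 n)^-1 + M * (4 * pow2 n)^-1.
  have -> : g n = f n - (f n - g n) by rewrite opprB addrC subrK.
  rewrite linearB; apply: le_trans (ler_normB _ _) _; apply: lerD; first exact: ltW.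
  by apply: le_trans (TM _) _; apply: ler_wpM2l.
have i0 : 0 <= (`|g n|)^-1 by rewrite invr_ge0 ltW.
rewrite /v linearZ normrZ (ger0_norm i0).
have hi : (`|g n|)^-1 <= 4 / 3.
  by rewrite -div1r ler_pdivrMr //; have := g_norm_ge n; lra.
apply: le_trans (ler_pM i0 (normr_ge0 _) hi hTg) _.
have -> : (4 * pow2 n)^-1 = 4^-1 * (pow2 n)^-1 by rewrite invfM.
rewrite le_eqVlt; apply/orP; left; apply/eqP; field.
by rewrite pow2_neq0.
Qed.

Lemma disjointification_not_DNS : ~ DNS L T.
Proof.
apply; exists v; split => //.
set K0 := 4 / 3 * (1 + M / 4).
apply: (@squeeze_cvgr _ _ _ _ (fun _ => 0) (geometric K0 (2^-1)));
  [|exact: cvg_cst|].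
- near=> n; rewrite normr_ge0 /=.
  by apply: le_trans (Tv_small n) _; rewrite /pow2 exprVn.
- by apply: cvg_geometric; rewrite ger0_norm ?invr_ge0 // invf_lt1 // ltr1n.
Unshelve. all: by end_near.
Qed.

End Disjointification.


Fixpoint rec_sum (pick : nat -> F -> F) (n : nat) : F :=
  if n is n'.+1 then rec_sum pick n' + ab (pick n' (rec_sum pick n')) else 0.

Lemma rec_sumE pick n : rec_sum pick n = \sum_(k < n) ab (pick k (rec_sum pick k)).
Proof. by elim: n => [|n IH]; rewrite ?big_ord0 // big_ord_recr /= IH. Qed.

Lemma recursive_choice {Q : nat -> F -> F -> Prop} :
  (forall n H, 0 <=: H -> exists f, Q n H f) ->
  exists f : nat -> F, forall n, Q n (\sum_(k < n) ab (f k)) (f n).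
Proof.
move=> hQ.
have [pick hpick] : exists pick : nat -> F -> F,
    forall n H, 0 <=: H -> Q n H (pick n H).
  have hQ' : forall nH : nat * F, exists f, 0 <=: nH.2 -> Q nH.1 nH.2 f.
    move=> [n H] /=; case: (pselect (0 <=: H)) => H0; last by exists 0.
    by have [f hf] := hQ n H H0; exists f.
  have [pk hpk] := choice hQ'.
  by exists (fun n H => pk (n, H)) => n H; exact: (hpk (n, H)).
exists (fun n => pick n (rec_sum pick n)) => n.
rewrite -rec_sumE; apply: hpick.
by elim: n => [|n IH] /=; [exact: lrefl|exact: add_ge0 IH (abs_ge0 _)].
Qed.

Definition cond_iv {E : normedModType R} (T : F -> E) : Prop :=
  exists eps : R, exists delta : R, exists h : F,
  [/\ 0 < eps, 0 < delta, 0 <=: h &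
      forall f : F, `|f| = 1 -> `|mt (ab f) h| < eps -> delta <= `|T f|].

(* If (iv) fails, then for every n and H >= 0 there is a unit vector f with
   |T f| < 2^-n and |f| almost disjoint from 4^n H: take h = 4^n H,
   eps = 1 / (8 8^n) and delta = 2^-n in the negation of (iv). *)
Lemma not_iv_pick {E : normedModType R} {T : F -> E} : ~ cond_iv T ->
  forall n H, 0 <=: H -> exists f : F,
    [/\ `|f| = 1, `|mt (ab f) ((pow2 n * pow2 n) *: H)| < (8 * pow2 n ^+ 3)^-1
      & `|T f| < (pow2 n)^-1].
Proof.
move=> niv n H H0; apply: contrapT => nf; apply: niv.
exists (8 * pow2 n ^+ 3)^-1, (pow2 n)^-1, ((pow2 n * pow2 n) *: H); split.
- by rewrite invr_gt0 mulr_gt0 ?exprn_gt0 ?pow2_gt0.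
- by rewrite invr_gt0 pow2_gt0.
- by apply: scale_ge0 => //; rewrite mulr_ge0 ?ltW ?pow2_gt0.
- move=> f f1 fe; rewrite leNgt; apply/negP => fT; apply: nf; exists f; split => //.
Qed.

(* (i) => (iv): otherwise the recursively chosen vectors of [not_iv_pick]
   feed the disjointification. *)
Lemma DNS_iv (E : normedModType R) (T : {linear F -> E}) : continuous T ->
  DNS L T -> cond_iv T.
Proof.
move=> Tc dns; apply: contrapT => niv.
have [M M_gt0 TM] : exists2 M : R, 0 < M & forall x, `|T x| <= M * `|x|.
  apply: pinfty_ex_gt0; apply/linear_boundedP.
  exact: continuous_linear_bounded (Tc 0).
have [f hf] := recursive_choice (not_iv_pick niv).
apply: (@disjointification_not_DNS E T M (ltW M_gt0) TM f) dns => n;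
  by case: (hf n).
Qed.

(* (iv) => (iii), net version: along an un-null net the meets |f i| /\ h
   eventually drop below eps, forcing |T f i| >= delta. *)
Lemma iv_net (E : normedModType R) (T : F -> E) : cond_iv T ->
  forall (I : Type) (FI : set_system I) (f : I -> F),
    ProperFilter FI -> (forall i, `|f i| = 1) -> un_null L FI f ->
    ~ ((fun i => `|T (f i)|) @ FI --> (0 : R)).
Proof.
move=> [eps [delta [h [e0 d0 h0 Hf]]]] I FI f PF f1 un Tc0.
have H1 : \forall i \near FI, `|0 - `|mt (ab (f i)) h| | < eps.
  exact: (cvgrPdist_lt _ _).1 (un h h0) eps e0.
have H2 : \forall i \near FI, `|0 - `|T (f i)| | < delta.
  exact: (cvgrPdist_lt _ _).1 Tc0 delta d0.
have [i [/= hi1 hi2]] := filter_ex (filterI H1 H2).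
move: hi1 hi2; rewrite !sub0r !normrN !normr_id => hi1 hi2.
by have := Hf (f i) (f1 i) hi1; rewrite leNgt hi2.
Qed.

Lemma net_seq (E : normedModType R) (T : F -> E) :
  (forall (I : Type) (FI : set_system I) (f : I -> F),
    ProperFilter FI -> (forall i, `|f i| = 1) -> un_null L FI f ->
    ~ ((fun i => `|T (f i)|) @ FI --> (0 : R))) ->
  ~ (exists f : nat -> F, [/\ forall n, `|f n| = 1, un_null_seq L f &
         (fun n => `|T (f n)|) @ \oo --> (0 : R)]).
Proof. by move=> Hn [f [f1 un Tc0]]; exact: (Hn nat \oo f _ f1 un Tc0). Qed.

Lemma shift_disj (f : nat -> F) N :
  (forall n m, n <> m -> bdisjoint L (f n) (f m)) ->
  forall n m, n <> m -> bdisjoint L (f (n + N)%N) (f (m + N)%N).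
Proof.
move=> fd n m nm; apply: fd => e; apply: nm; apply/eqP.
by rewrite -(eqn_add2r N) e.
Qed.

(* Perturbation: if no disjoint unit sequence has |T f n| <= delta, then
   every S with |S - T| <= c < delta is DNS: a bad sequence for S has a tail
   on which |T f n| <= |S f n| + c <= delta. *)
Lemma perturb_DNS (E : normedModType R) (T S : F -> E) (delta : R) : 0 < delta ->
  ~ (exists f : nat -> F,
        [/\ forall n, `|f n| = 1,
            forall n m, n <> m -> bdisjoint L (f n) (f m) &
            forall n, `|T (f n)| <= delta]) ->
  (exists2 c : R, c < delta & forall x : F, `|S x - T x| <= c * `|x|) ->
  DNS L S.
Proof.
move=> d0 ns [c cd Hc] [f [f1 fd Sc0]]; apply: ns.
have dc : 0 < delta - c by rewrite subr_gt0.
have [N _ HN] := (cvgrPdist_lt _ _).1 Sc0 (delta - c) dc.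
exists (fun n => f (n + N)%N); split.
- by move=> n; exact: f1.
- exact: shift_disj.
- move=> n; have := HN (n + N)%N (leq_addl _ _).
  rewrite /= sub0r normrN normr_id => hS.
  set y := f (n + N)%N.
  have h1 : `|T y| <= `|S y| + `|S y - T y|.
    have {1}-> : T y = S y - (S y - T y) by rewrite opprB addrC subrK.
    exact: ler_normB.
  have := Hc y; rewrite /y f1 mulr1 => h2.
  lra.
Qed.

Lemma strict_DNS (E : normedModType R) (T : F -> E) : strictly_DNS L T -> DNS L T.
Proof.
move=> [delta d0 ns]; apply: (@perturb_DNS E T T delta d0 ns).
by exists 0 => // x; rewrite subrr normr0 mul0r.
Qed.

Section OrderContinuous.
Hypothesis Hoc : order_continuous L.

(* (iii), sequence version, implies (i): disjoint sequences are un-null. *)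
Lemma seq_DNS (E : normedModType R) (T : F -> E) :
  ~ (exists f : nat -> F, [/\ forall n, `|f n| = 1, un_null_seq L f &
         (fun n => `|T (f n)|) @ \oo --> (0 : R)]) -> DNS L T.
Proof.
move=> ns [f [f1 fd Tc0]]; apply: ns; exists f; split => //.
exact: disjoint_un_null Hoc f fd.
Qed.

(* (iv) => (ii): a disjoint unit sequence is un-null, so it eventually meets
   h below eps, where T is bounded below by delta > delta / 2. *)
Lemma iv_strict (E : normedModType R) (T : F -> E) : cond_iv T -> strictly_DNS L T.
Proof.
move=> [eps [delta [h [e0 d0 h0 Hf]]]]; exists (delta / 2); first by rewrite divr_gt0.
move=> [f [f1 fd fT]].
have un := disjoint_un_null Hoc f fd h h0.
have [N _ HN] := (cvgrPdist_lt _ _).1 un eps e0.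
have := HN N (leqnn N); rewrite /= sub0r normrN normr_id => hN.
by have := Hf (f N) (f1 N) hN; have := fT N; lra.
Qed.

End OrderContinuous.
End BanachLatticeTheory.

Theorem theorem5p7 (R : realType) (F : completeNormedModType R)
  (L : BanachLattice F) (Hoc : order_continuous L)
  (E : completeNormedModType R) :
  (forall T : {linear F -> E}, continuous T ->
     [/\ DNS L T <-> strictly_DNS L T,
         DNS L T <-> ~ (exists f : nat -> F,
                          [/\ forall n, `|f n| = 1, un_null_seq L f &
                              (fun n => `|T (f n)|) @ \oo --> (0 : R)]),
         DNS L T <-> (forall (I : Type) (FI : set_system I) (f : I -> F),
                        ProperFilter FI ->
                        (forall i, `|f i| = 1) -> un_null L FI f ->
                        ~ ((fun i => `|T (f i)|) @ FI --> (0 : R))) &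
         DNS L T <-> exists eps : R, exists delta : R, exists h : F,
                       [/\ 0 < eps, 0 < delta, ble L 0 h &
                           forall f : F, `|f| = 1 ->
                             `|bmeet L (babs L f) h| < eps -> delta <= `|T f|]])
  /\
  (forall T : {linear F -> E}, continuous T -> DNS L T ->
     exists2 r : R, 0 < r &
       forall S : {linear F -> E}, continuous S ->
         (exists2 c : R, c < r & forall x : F, `|S x - T x| <= c * `|x|) ->
         DNS L S).
Proof.
split=> [T Tc | T Tc dns].
- (* the cycle (i) => (iv) => (iii, nets) => (iii, sequences) => (i),
     together with (iv) => (ii) => (i) *)
  have iv := @DNS_iv _ _ L E T Tc.
  have iv_ii := @iv_strict _ _ L Hoc E T.
  have seq_i := @seq_DNS _ _ L Hoc E T.
  have net_seq_i := @net_seq _ _ L E T.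
  have iv_net_T := @iv_net _ _ L E T.
  split; split.
  + by move=> /iv /iv_ii.
  + exact: strict_DNS.
  + by move=> /iv /iv_net_T /net_seq_i.
  + exact: seq_i.
  + by move=> /iv /iv_net_T.
  + by move=> /net_seq_i /seq_i.
  + exact: iv.
  + by move=> /iv_net_T /net_seq_i /seq_i.
- (* a strict DNS constant delta of T is a radius of openness *)
  have [delta d0 ns] := @iv_strict _ _ L Hoc E T (@DNS_iv _ _ L E T Tc dns).
  by exists delta => // S _; exact: (@perturb_DNS _ _ L E T S delta d0 ns).
Qed.
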